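(* Let $n=5$, fix pairwise distinct $i,j,k\in\{1,2,3\}$, and let $\boldsymbol{D}$ be a channel matrix of monomials. Consider offsets $p$ satisfying the alignment equations (A1)–(A8). Then: (1) Such offsets $p$ satisfying (A1)–(A8) together with all separability conditions (S1)–(S3) except the two inter-user collisions forced by (A5) and (A8) exist if $\boldsymbol{D}$ satisfies conditions (i)–(x) below; conversely, if such offsets exist then $\boldsymbol{D}$ satisfies (i)–(x). (2) Under (i)–(x), if the message $W_{jk}$ is delivered from $\mathrm{Tx}_k$ to $\mathrm{Rx}_j$ over a single interference-free feedforward backhaul link of rate $1$ (one message), and $\mathrm{Tx}_k$ does not transmit $W_{jk}$ over the channel, then every one of the $9$ messages is obtained by its intended receiver within $n=5$ dimensions, i.e. $\frac{9}{5}$ degrees of freedom are achieved with feedforward sum-rate $\Theta_{\mathrm{FF}}=1$. (3) Feedforward sum-rate $\Theta_{\mathrm{FF}}\ge 1$ is necessary to achieve $\frac{9}{5}$ degrees of freedom with $n=5$. Conditions (all congruences mod $x^5-1$): (i) $d_{ij}d_{ki}d_{jk}\equiv d_{ji}d_{ik}d_{kj}$; (ii) $d_{ii}d_{jk}d_{kj}\equiv d_{jj}d_{ik}d_{ki}\equiv d_{kk}d_{ij}d_{ji}$; (iii) $d_{ii}d_{kk}\not\equiv d_{ik}d_{ki}$; (iv) $d_{ii}d_{jj}\not\equiv d_{ij}d_{ji}$; (v) $d_{ii}d_{jk}\not\equiv d_{ik}d_{ji}$; (vi) $d_{ij}d_{jk}\not\equiv d_{ik}d_{jj}$; (vii) $d_{kk}d_{ji}\not\equiv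 d_{ki}d_{jk}$; (viii) $d_{kk}d_{jj}\not\equiv d_{kj}d_{jk}$; (ix) $d_{ii}d_{jj}d_{kk}\not\equiv d_{ij}d_{jk}d_{ki}$ (and $d_{ij}d_{jk}d_{ki}\equiv d_{ji}d_{kj}d_{ik}$); (x) $d_{kk}d_{ii}d_{jj}d_{kk}\not\equiv d_{jk}d_{kj}d_{ik}d_{ki}$, $d_{ii}d_{ii}d_{jj}d_{kk}\not\equiv d_{ij}d_{ji}d_{ik}d_{ki}$, $d_{jj}d_{ii}d_{jj}d_{kk}\not\equiv d_{ij}d_{ji}d_{jk}d_{kj}$.
   Context: Cyclic polynomial channel model of the $3$-user $X$-network. Fix $n\in\mathbb{N}$; all congruences are taken in the polynomial ring modulo $x^n-1$, so $x^a\equiv x^b$ iff $a\equiv b \pmod n$. Let $\mathcal{K}=\{1,2,3\}$. Transmitter $\mathrm{Tx}_i$ holds one message $W_{ji}$ for each receiver $\mathrm{Rx}_j$ ($9$ messages), each an element of an abelian group (binary strings of length $t$). $\mathrm{Tx}_i$ chooses offsets $p_{ji}\in\{0,\dots,n-1\}$ and transmits $u_i(x)\equiv\sum_{j}W_{ji}x^{p_{ji}}$. The channel matrix $\boldsymbol{D}=(d_{ji})$ has each $d_{ji}$ a monomial $x^k$, $k\in\mathbb{N}$, known to all. $\mathrm{Rx}_j$ observes $r_j(x)\equiv\sum_i d_{ji}u_i(x)$, whose coefficient at $x^m$ is the sum of all messages arriving at offset $m$. At $\mathrm{Rx}_a$ the dedicated signals are $d_{al}x^{p_{al}}$ ($l\in\mathcal{K}$)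 and the interfering signals are $d_{al}x^{p_{bl}}$ with $b\neq a$. Separability conditions: (S1) for each $i$, $x^{p_{1i}},x^{p_{2i}},x^{p_{3i}}$ pairwise incongruent; (S2) for each $a$, the three dedicated signals at $\mathrm{Rx}_a$ pairwise incongruent; (S3) for each $a$, every dedicated signal at $\mathrm{Rx}_a$ incongruent to every interfering signal at $\mathrm{Rx}_a$. A message is received interference-free if it occupies an offset at its intended receiver containing no other message; degrees of freedom $=M/n$ with $M$ the number of messages obtained by their intended receivers. A feedforward backhaul link from $\mathrm{Tx}_i$ to $\mathrm{Rx}_j$ of rate $1$ delivers one message $W_{ji}$ interference-free; $\Theta_{\mathrm{FF}}$ is the total number of messages sent over such links. Alignment scheme for fixed pairwise distinct $i,j,k$: (A1) $d_{ii}x^{p_{ji}}\equiv d_{ij}x^{p_{kj}}\equiv d_{ik}x^{p_{jk}}$; (A2) $d_{ii}x^{p_{ki}}\equiv d_{ij}x^{p_{jj}}\equiv d_{ik}x^{p_{kk}}$; (A3) $d_{ji}x^{p_{ki}}\equiv d_{jj}x^{p_{kj}}\equiv d_{jk}x^{p_{ik}}$; (A4) $d_{ji}x^{p_{ii}}\equiv d_{jk}x^{p_{kk}}$; (A5) $d_{jj}x^{p_{ij}}\equiv d_{jk}x^{p_{jk}}$; (A6) $d_{ki}x^{p_{ii}}\equiv d_{kj}x^{p_{jj}}\equiv d_{kk}x^{p_{ik}}$; (A7) $d_{kj}x^{p_{ij}}\equiv d_{ki}x^{p_{ji}}$; (A8) $d_{ki}x^{p_{ki}}\equiv d_{kk}x^{p_{jk}}$.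 (A5) violates (S3) at $\mathrm{Rx}_j$ (dedicated $W_{jk}$ collides with interfering $W_{ij}$), and (A8) violates (S3) at $\mathrm{Rx}_k$ (dedicated $W_{ki}$ collides with interfering $W_{jk}$); these two collisions are the exempted ones. *)

(* A monomial x^e modulo x^n - 1 is represented by its exponent e : nat;
   x^a == x^b (mod x^n - 1) iff a = b %[mod n]; products of monomials
   correspond to sums of exponents.
   Indices: 'I_3 = {0,1,2} stands for users {1,2,3}.
   d r t  : exponent of d_{rt} (channel from Tx_t to Rx_r).
   p r t  : offset p_{rt} (in {0..n-1}) of message W_{rt} at Tx_t. *)
From mathcomp Require Import all_boot.
Set Implicit Arguments. Unset Strict Implicit. Unset Printing Implicit Defensive.

Definition chan := 'I_3 -> 'I_3 -> nat.
Definition offs (n : nat) := 'I_3 -> 'I_3 -> 'I_n.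

(* position (exponent) at which Rx_r sees message W_{b l} sent by Tx_l *)
Definition pos (n : nat) (d : chan) (p : offs n) (r b l : 'I_3) : nat := d r l + p b l.

Definition alignment n (d : chan) (p : offs n) (i j k : 'I_3) : Prop :=
  [/\ ((d i i + p j i = d i j + p k j %[mod n]) /\ (d i j + p k j = d i k + p j k %[mod n])),
      ((d i i + p k i = d i j + p j j %[mod n]) /\ (d i j + p j j = d i k + p k k %[mod n])),
      ((d j i + p k i = d j j + p k j %[mod n]) /\ (d j j + p k j = d j k + p i k %[mod n])),
      (d j i + p i i = d j k + p k k %[mod n])
    & [/\ (d j j + p i j = d j k + p j k %[mod n]),
      ((d k i + p i i = d k j + p j j %[mod n]) /\ (d k j + p j j = d k k + p i k %[mod n])),
      (d k j + p i j = d k i + p j i %[mod n])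
    & (d k i + p k i = d k k + p j k %[mod n])]].

Definition S1 n (p : offs n) : Prop :=
  forall t a b : 'I_3, a != b -> (p a t : nat) <> p b t %[mod n].
Definition S2 n (d : chan) (p : offs n) : Prop :=
  forall a l l' : 'I_3, l != l' -> (pos d p a a l <> pos d p a a l' %[mod n]).
(* (S3) except the two collisions forced by (A5) and (A8):
   at Rx_j dedicated W_{jk} vs interfering W_{ij};
   at Rx_k dedicated W_{ki} vs interfering W_{jk}. *)
Definition S3_except n (d : chan) (p : offs n) (i j k : 'I_3) : Prop :=
  forall a l b l' : 'I_3, b != a ->
    ~ ((a, l, b, l') = (j, k, i, j)) -> ~ ((a, l, b, l') = (k, i, j, k)) ->
    (pos d p a a l <> pos d p a b l' %[mod n]).

Definition interference_free n (d : chan) (p : offs n)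
    (T : {set 'I_3 * 'I_3}) (a l : 'I_3) : Prop :=
  (a, l) \in T /\
  forall b l' : 'I_3, (b, l') \in T -> (b, l') <> (a, l) ->
    (pos d p a b l' <> pos d p a a l %[mod n]).

(* With backhaul set [B] (messages W_{al} delivered over rate-1 feedforward
   links, not transmitted over the channel), W_{al} is obtained by Rx_a. *)
Definition obtained n (d : chan) (p : offs n) (B : {set 'I_3 * 'I_3}) (a l : 'I_3) : Prop :=
  (a, l) \in B \/ interference_free d p (~: B) a l.

Definition conditions n (d : chan) (i j k : 'I_3) : Prop :=
  [/\ (d i j + d k i + d j k = d j i + d i k + d k j %[mod n]),
      ((d i i + d j k + d k j = d j j + d i k + d k i %[mod n])
                /\ (d j j + d i k + d k i = d k k + d i j + d j i %[mod n])),
      (d i i + d k k <> d i k + d k i %[mod n]),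
      (d i i + d j j <> d i j + d j i %[mod n])
    & [/\ (d i i + d j k <> d i k + d j i %[mod n]),
      (d i j + d j k <> d i k + d j j %[mod n]),
      (d k k + d j i <> d k i + d j k %[mod n])
    & [/\ (d k k + d j j <> d k j + d j k %[mod n]),
      ((d i i + d j j + d k k <> d i j + d j k + d k i %[mod n])
                /\ (d i j + d j k + d k i = d j i + d k j + d i k %[mod n]))
    & [/\ (d k k + d i i + d j j + d k k <> d j k + d k j + d i k + d k i %[mod n]),
                  (d i i + d i i + d j j + d k k <> d i j + d j i + d i k + d k i %[mod n])
                & (d j j + d i i + d j j + d k k <> d i j + d j i + d j k + d k j %[mod n])]]]].

(* Reading exponents modulo 5, (A1)-(A8) are linear congruences in the nine
   offsets.  Eliminating the offsets leaves the cycle identities (i) and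
   (ii) on the channel, and separating W_{ii} from W_{ij} at Rx_i turns into the
   gap condition (iv); modulo 5 the remaining inequalities (iii), (v)-(x) follow
   from (iv) and the identities.  Conversely, once the gap is nonzero an explicit
   solution of (A1)-(A8) meets every separability condition.  (A5) stacks W_{ij}
   on W_{jk} at Rx_j, so no scheme can do without a backhaul link, and moving
   W_{jk} to the backhaul also defuses the collision forced by (A8). *)

From mathcomp Require Import all_boot zify.

Set Implicit Arguments.
Unset Strict Implicit.
Unset Printing Implicit Defensive.

Lemma ord3_cover (i j k : 'I_3) :
  i != j -> j != k -> i != k -> forall t, [\/ t = i, t = j | t = k].
Proof.
move=> hij hjk hik t; move: i j k t hij hjk hik.
do 4! case=> [[|[|[|//]]] ?]; move=> //= *;
by [apply: Or31; apply: val_inj | apply: Or32; apply: val_inj | apply: Or33; apply: val_inj].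
Qed.

Lemma conditions5P (d : chan) (i j k : 'I_3) :
  conditions 5 d i j k <->
  [/\ d i j + d k i + d j k = d j i + d i k + d k j %[mod 5],
      d i i + d j k + d k j = d j j + d i k + d k i %[mod 5],
      d j j + d i k + d k i = d k k + d i j + d j i %[mod 5]
    & d i i + d j j <> d i j + d j i %[mod 5]].
Proof.
split; first by case=> E1 [E2 E3] _ C4 _.
by case=> E1 E2 E3 C4; do ![split]; lia.
Qed.

Section Alignment.
Variables (d : chan) (p : offs 5) (i j k : 'I_3).
Hypothesis align : alignment d p i j k.

Lemma alignment_channel_cycles :
  [/\ d i j + d k i + d j k = d j i + d i k + d k j %[mod 5],
      d i i + d j k + d k j = d j j + d i k + d k i %[mod 5]
    & d j j + d i k + d k i = d k k + d i j + d j i %[mod 5]].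
Proof.
case: align => [[A1 A1'] [A2 A2'] [A3 A3'] A4 [A5 [A6 A6'] A7 A8]].
split; lia.
Qed.

Lemma alignment_S2_gap : i != j -> S2 d p -> d i i + d j j <> d i j + d j i %[mod 5].
Proof.
move=> hij /(_ i i j hij); rewrite /pos.
case: align => [[A1 A1'] [A2 A2'] [A3 A3'] A4 [A5 [A6 A6'] A7 A8]].
lia.
Qed.

Lemma alignment_S2_conditions : i != j -> S2 d p -> conditions 5 d i j k.
Proof.
move=> hij HS2; have [E1 E2 E3] := alignment_channel_cycles.
by apply/conditions5P; split=> //; exact: alignment_S2_gap.
Qed.

End Alignment.

Section Construction.
Variables (d : chan) (i j k : 'I_3).
Hypotheses (hij : i != j) (hjk : j != k) (hik : i != k).

(* Offsets are only determined up to a common shift, normalised here by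
   [p j i = 0]; [4 * x] stands for [- x] modulo 5 and [g] is the gap of (iv). *)
Definition aligned_offset (r t : 'I_3) : nat :=
  let g := d i i + d j j + 4 * d i j + 4 * d j i in
  if t == i then
    if r == i then d j k + d i i + g + 4 * d i k + 4 * d j i
    else if r == j then 0 else g
  else if t == j then
    if r == i then d j k + d i i + 4 * d i k + 4 * d j j
    else if r == j then d i i + g + 4 * d i j else d i i + 4 * d i j
  else
    if r == i then d j i + g + 4 * d j k
    else if r == j then d i i + 4 * d i k else d i i + g + 4 * d i k.

Definition aligned_offsets : offs 5 :=
  fun r t => Ordinal (ltn_pmod (aligned_offset r t) (isT : 0 < 5)).

Hypotheses (cycle_i : d i j + d k i + d j k = d j i + d i k + d k j %[mod 5])
  (cycle_ij : d i i + d j k + d k j = d j j + d i k + d k i %[mod 5])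
  (cycle_jk : d j j + d i k + d k i = d k k + d i j + d j i %[mod 5])
  (gap : d i i + d j j <> d i j + d j i %[mod 5]).

Let eji : (j == i) = false. Proof. by rewrite eq_sym (negbTE hij). Qed.
Let ekj : (k == j) = false. Proof. by rewrite eq_sym (negbTE hjk). Qed.
Let eki : (k == i) = false. Proof. by rewrite eq_sym (negbTE hik). Qed.
Let eij : (i == j) = false. Proof. exact: negbTE. Qed.
Let ejk : (j == k) = false. Proof. exact: negbTE. Qed.
Let eik : (i == k) = false. Proof. exact: negbTE. Qed.

Local Ltac solve_offsets :=
  rewrite /pos /aligned_offsets /aligned_offset /= !eqxx;
  rewrite ?eij ?eji ?ejk ?ekj ?eik ?eki /= ?mod0n;
  clear -cycle_i cycle_ij cycle_jk gap; lia.

Local Ltac case_index t :=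
  case: (ord3_cover hij hjk hik t) => ->.

Lemma aligned_offsets_alignment : alignment d aligned_offsets i j k.
Proof. by do ![split]; solve_offsets. Qed.

Lemma aligned_offsets_S1 : S1 aligned_offsets.
Proof.
move=> t a b; case_index t; case_index a; case_index b; rewrite ?eqxx // => _;
solve_offsets.
Qed.

Lemma aligned_offsets_S2 : S2 d aligned_offsets.
Proof.
move=> a l l'; case_index a; case_index l; case_index l'; rewrite ?eqxx // => _;
solve_offsets.
Qed.

Lemma aligned_offsets_S3_except : S3_except d aligned_offsets i j k.
Proof.
move=> a l b l'; case_index a; case_index l; case_index b; case_index l';
rewrite ?eqxx // => _ ex1 ex2; try by [case: ex1 | case: ex2].
all: solve_offsets.
Qed.

End Construction.

Lemma aligned_offsets_separable (d : chan) (i j k : 'I_3)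
    (hij : i != j) (hjk : j != k) (hik : i != k) :
  conditions 5 d i j k ->
  let p := aligned_offsets d i j k in
  [/\ alignment d p i j k, S1 p, S2 d p & S3_except d p i j k].
Proof.
case/conditions5P=> cycle_i cycle_ij cycle_jk gap.
split; [exact: aligned_offsets_alignment | exact: aligned_offsets_S1 |
        exact: aligned_offsets_S2 | exact: aligned_offsets_S3_except].
Qed.

Lemma backhaul_jk_obtained n (d : chan) (p : offs n) (i j k : 'I_3) :
  S2 d p -> S3_except d p i j k -> forall a l, obtained d p [set (j, k)] a l.
Proof.
move=> HS2 HS3 a l; rewrite /obtained in_set1.
have [_|al_jk] := eqVneq (a, l) (j, k); [by left | right].
split=> [|b l']; first by rewrite in_setC in_set1 al_jk.
rewrite in_setC in_set1 => bl'_jk bl'_al.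
have [ba|ba] := eqVneq b a.
  by subst b; apply: HS2; apply/eqP => l'l; apply: bl'_al; rewrite l'l.
move=> /esym; apply: HS3 ba _ _.
- by case=> ea el _ _; rewrite ea el eqxx in al_jk.
- by case=> _ _ eb el'; rewrite eb el' eqxx in bl'_jk.
Qed.

Lemma alignment_backhaul_nonempty n (d : chan) (p : offs n) (i j k : 'I_3)
    (B : {set 'I_3 * 'I_3}) :
  i != j -> alignment d p i j k -> (forall a l, obtained d p B a l) -> B != set0.
Proof.
move=> hij [_ _ _ _ [A5 _ _ _]] obt; apply/eqP => B0.
have [|[_ jk_free]] := obt j k; first by rewrite B0 in_set0.
apply: (jk_free i j _ _ A5); first by rewrite B0 in_setC in_set0.
by case=> ij; rewrite ij eqxx in hij.
Qed.

Theorem theorem2 (d : chan) (i j k : 'I_3) :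
  i != j -> j != k -> i != k ->
  ((exists p : offs 5,
      [/\ alignment d p i j k, S1 p, S2 d p & S3_except d p i j k])
   <-> conditions 5 d i j k)
  /\
  (conditions 5 d i j k ->
   exists p : offs 5,
     [/\ alignment d p i j k, S1 p, S2 d p, S3_except d p i j k
       & (#|[set (j, k)]| = 1 /\ forall a l : 'I_3, obtained d p [set (j, k)] a l)])
  /\
  (forall (p : offs 5) (B : {set 'I_3 * 'I_3}),
     alignment d p i j k ->
     (forall a l : 'I_3, obtained d p B a l) ->
     1 <= #|B|).
Proof.
move=> hij hjk hik.
have construct := aligned_offsets_separable hij hjk hik.
split; [split | split].
- by case=> p [align _ HS2 _]; exact: alignment_S2_conditions align hij HS2.
- by move=> /construct; exists (aligned_offsets d i j k).
- move=> /construct [align HS1 HS2 HS3]; exists (aligned_offsets d i j k).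
  by split=> //; split; [exact: cards1 | exact: backhaul_jk_obtained HS2 HS3].
- move=> p B align obt; rewrite card_gt0.
  exact: alignment_backhaul_nonempty hij align obt.
Qed.
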